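(* Let $(A,C,k)$ be an instance and $W$ an affordable committee. Let $\overline{W}$ be obtained from $W$ by completion with the maximin support rule. Then $\mathrm{supp}(\overline{W})\ge\frac12\max\{\mathrm{supp}(W'):W'\subseteq C,|W'|=k\}$.
   Context: An instance $(A,C,k)$ consists of a finite nonempty candidate set $C$, voters $N=\{1,\dots,n\}$, approval sets $A_i\subseteq C$, and a committee size $1\le k\le|C|$. A committee is $W\subseteq C$ with $|W|\le k$. For a nonempty committee $W$, its maximin support is $\mathrm{supp}(W)=\min_{\emptyset\ne S\subseteq W}\frac{1}{|S|}|\{i\in N: A_i\cap S\ne\emptyset\}|$. Completion with the maximin support rule repeatedly adds to the current committee $W$ a candidate $c\notin W$ maximizing $\mathrm{supp}(W\cup\{c\})$ (ties arbitrary) until the committee has size $k$. $W$ is affordable if there are $p_i:C\to\mathbb{R}_{\ge0}$ ($i\in N$) with $p_i(c)=0$ for $c\notin A_i$, $\sum_c p_i(c)\le k/n$, $\sum_i p_i(c)=1$ for $c\in W$, $\sum_i p_i(c)=0$ for $c\notin W$. *)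

From mathcomp Require Import all_boot all_order all_algebra.
Set Implicit Arguments. Unset Strict Implicit. Unset Printing Implicit Defensive.
Import Order.TTheory GRing.Theory Num.Theory.
Local Open Scope ring_scope.

Section ABC.
Variables (R : realFieldType) (C : finType) (n : nat) (A : 'I_n -> {set C}).

Definition napprovers (S : {set C}) : nat :=
  #|[set i : 'I_n | ~~ [disjoint A i & S]]|.

Definition ratio (S : {set C}) : R := (napprovers S)%:R / (#|S|)%:R.

(* maximin support; the minimum ranges over nonempty subsets S of W.
   Only used for nonempty W (value 0 on the empty committee, irrelevant). *)
Definition supp (W : {set C}) : R :=
  if W == set0 then 0
  else \big[Num.min/ratio W]_(S in powerset W | S != set0) ratio S.

(* Wbar is a possible result of completing W with the maximin support rule
   (ties broken arbitrarily) up to size k *)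
Inductive completion (k : nat) : {set C} -> {set C} -> Prop :=
| completion_done (W : {set C}) : #|W| = k -> completion k W W
| completion_step (W : {set C}) (c : C) (Wbar : {set C}) :
    (#|W| < k)%N -> c \notin W ->
    (forall c', c' \notin W -> supp (c' |: W) <= supp (c |: W)) ->
    completion k (c |: W) Wbar -> completion k W Wbar.

Definition affordable (k : nat) (W : {set C}) : Prop :=
  exists p : 'I_n -> C -> R,
    [/\ forall i c, 0 <= p i c,
        forall i c, c \notin A i -> p i c = 0,
        forall i, \sum_(c : C) p i c <= k%:R / n%:R,
        forall c, c \in W -> \sum_(i < n) p i c = 1
      & forall c, c \notin W -> \sum_(i < n) p i c = 0].

(* max { supp(W') : W' ⊆ C, |W'| = k }  (supports are >= 0, so 0 is a safe default) *)
Definition max_supp (k : nat) : R :=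
  \big[Num.max/0]_(W' : {set C} | #|W'| == k) supp W'.

End ABC.

From Pilot Require Import Defs.
From mathcomp Require Import all_boot all_order all_algebra.
From mathcomp Require Import lra zify.
Set Implicit Arguments. Unset Strict Implicit. Unset Printing Implicit Defensive.
Import Order.TTheory GRing.Theory Num.Theory.
Local Open Scope ring_scope.

(* Let W' be a committee of size k and x := supp(W')/2; call X x-supported
   when every S included in X is approved by at least x|S| voters, i.e. when
   supp(X) >= x. Affordability gives W a support of n/k >= supp(W') >= x.
   The core is an exchange argument: if X is x-supported and |X| < k, some
   candidate can be added to X keeping it x-supported. Otherwise every
   c in W' \ X lies in a violating set S_c included in X + c; since the number
   of approvers is submodular and X has no violating subset, the union Z of
   the S_c is still violating. But Z covers W' \ X, so |Z| <= 2|Z ∩ W'|, and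
   N(Z) >= N(Z ∩ W') >= 2x|Z ∩ W'| >= x|Z|, a contradiction. The maximin rule
   adds a candidate of maximal support, so completion stays x-supported. *)

Section Approvers.
Variables (C : finType) (n : nat) (A : 'I_n -> {set C}).

Lemma napprovers0 : napprovers A set0 = 0%N.
Proof.
apply/eqP; rewrite cards_eq0; apply/eqP/setP => i.
by rewrite !inE -setI_eq0 setI0 eqxx.
Qed.

Lemma napproversS (S T : {set C}) :
  S \subset T -> (napprovers A S <= napprovers A T)%N.
Proof.
move=> sST; apply/subset_leq_card/subsetP => i; rewrite !inE.
exact/contra/disjointWr.
Qed.

Lemma napprovers_le (S : {set C}) : (napprovers A S <= n)%N.
Proof. by apply: leq_trans (max_card _) _; rewrite card_ord. Qed.

Lemma napproversUI (S T : {set C}) :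
  (napprovers A (S :|: T) + napprovers A (S :&: T)
     <= napprovers A S + napprovers A T)%N.
Proof.
rewrite /napprovers; apply: leq_trans (eq_leq (cardsUI _ _)).
apply: leq_add; apply/subset_leq_card/subsetP => i.
  by rewrite !inE -!setI_eq0 setIUr setU_eq0 negb_and.
rewrite !inE => meetST; apply/andP; split; apply: contra meetST; apply: disjointWr;
  [exact: subsetIl | exact: subsetIr].
Qed.

Lemma card_le_double_setI (X Y Z : {set C}) :
  (#|X| <= #|Y|)%N -> Z \subset X :|: Y -> Y :\: X \subset Z ->
  (#|Z| <= (#|Z :&: Y|).*2)%N.
Proof.
move=> leXY sZXY sYXZ.
have sZY_XY : Z :\: Y \subset X :\: Y.
  by rewrite -[X :\: Y]setU0 -(setDv Y) -setDUl setSD.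
have sYX_ZY : Y :\: X \subset Z :&: Y by rewrite subsetI sYXZ subsetDl.
have := subset_leq_card sZY_XY; have := subset_leq_card sYX_ZY.
have := cardsID Y Z; rewrite !cardsD [Y :&: X]setIC; lia.
Qed.

End Approvers.

Section Support.
Variables (R : realFieldType) (C : finType) (n : nat) (A : 'I_n -> {set C}).
Local Notation N := (napprovers A).

Definition supported (x : R) (X : {set C}) : bool :=
  [forall (S : {set C} | S \subset X), x * #|S|%:R <= (N S)%:R].

Lemma le_ratio (x : R) (S : {set C}) :
  S != set0 -> (x <= Defs.ratio R A S) = (x * #|S|%:R <= (N S)%:R).
Proof. by move=> S0; rewrite ler_pdivlMr // ltr0n card_gt0. Qed.

Lemma supp_ge_supported x X : X != set0 -> (x <= supp R A X) = supported x X.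
Proof.
move=> X0; rewrite /supp (negbTE X0).
apply/bigmin_geP/forall_inP => [[_ le_x] S sSX | le_x].
  have [->|S0] := eqVneq S set0; first by rewrite napprovers0 cards0 mulr0.
  by rewrite -le_ratio //; apply: le_x; rewrite powersetE sSX.
split=> [|S /andP[]]; first by rewrite le_ratio ?le_x.
by rewrite powersetE => sSX S0; rewrite le_ratio ?le_x.
Qed.

Lemma supported_supp X : X != set0 -> supported (supp R A X) X.
Proof. by move=> X0; rewrite -supp_ge_supported. Qed.

Lemma supp_ge0 X : 0 <= supp R A X.
Proof.
have [->|X0] := eqVneq X set0; first by rewrite /supp eqxx.
by rewrite supp_ge_supported //; apply/forall_inP => S _; rewrite mul0r.
Qed.

Lemma supported_le x y X : y <= x -> supported x X -> supported y X.
Proof.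
move=> le_yx /forall_inP le_x; apply/forall_inP => S sSX.
exact: le_trans (ler_wpM2r (ler0n _ _) le_yx) (le_x S sSX).
Qed.

Lemma supp_le_div_card X : X != set0 -> supp R A X <= n%:R / #|X|%:R.
Proof.
move=> X0; rewrite ler_pdivlMr ?ltr0n ?card_gt0 //.
have /forall_inP/(_ X (subxx X)) := supported_supp X0.
by move/le_trans; apply; rewrite ler_nat napprovers_le.
Qed.

Lemma affordable_supported k W :
  (0 < n)%N -> (0 < k)%N -> affordable R A k W -> supported (n%:R / k%:R) W.
Proof.
move=> n_gt0 k_gt0 [p [p_ge0 p_approved p_budget p_W _]].
apply/forall_inP => S sSW.
have cardS : #|S|%:R = \sum_(i < n) \sum_(c in S) p i c.
  rewrite exchange_big /= -sumr_const; apply: eq_bigr => c cS.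
  by rewrite p_W // (subsetP sSW).
have payS : \sum_(i < n) \sum_(c in S) p i c <= (N S)%:R * (k%:R / n%:R).
  rewrite (bigID (mem [set i | ~~ [disjoint A i & S]])) /= [X in _ + X]big1 ?addr0.
    rewrite mulr_natl -sumr_const; apply: ler_sum => i _.
    apply: le_trans (p_budget i); rewrite [X in _ <= X](bigID (mem S)) /= lerDl.
    by apply: sumr_ge0 => c _; apply: p_ge0.
  move=> i; rewrite inE negbK => disjS; apply: big1 => c cS; apply: p_approved.
  by apply: contraTN disjS => cA; apply/pred0Pn; exists c; rewrite /= cA.
have k_pos : (0 : R) < k%:R by rewrite ltr0n.
have n_pos : (0 : R) < n%:R by rewrite ltr0n.
rewrite mulrC -ler_pdivlMr ?divr_gt0 // invf_div; apply: le_trans payS.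
by rewrite cardS.
Qed.

Lemma supported_setU_violated x W Z S :
  supported x W -> Z :&: S \subset W ->
  (N Z)%:R < x * #|Z|%:R -> (N S)%:R < x * #|S|%:R ->
  (N (Z :|: S))%:R < x * #|Z :|: S|%:R.
Proof.
move=> /forall_inP suppW sZSW violZ violS.
have := suppW _ sZSW; have := napproversUI A Z S; rewrite -(ler_nat R) !natrD.
have := cardsUI Z S; move/(congr1 (fun m => x * m%:R)); rewrite !natrD !mulrDr.
lra.
Qed.

Lemma violated_cover x W (D : {set C}) :
  supported x W ->
  (forall c, c \in D ->
     exists2 S : {set C}, S \subset c |: W & (N S)%:R < x * #|S|%:R) ->
  D != set0 ->
  exists Z : {set C}, [/\ Z \subset W :|: D, D \subset Z & (N Z)%:R < x * #|Z|%:R].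
Proof.
move=> suppW viol.
have [m] := ubnP #|D|; elim: m => // m IH in D viol *; rewrite ltnS => leDm D0.
have [c cD] := set0Pn _ D0; have [S sScW violS] := viol c cD.
have cS : c \in S.
  apply: contraLR violS => cNS; rewrite -leNgt.
  move/forall_inP: suppW; apply; apply/subsetP => y yS.
  by case/setU1P: (subsetP sScW y yS) => // yc; rewrite -yc yS in cNS.
have sSWD : S \subset W :|: D.
  by apply: subset_trans sScW _; rewrite subUset sub1set !inE cD orbT subsetUl.
have [Dc0|Dc0] := eqVneq (D :\ c) set0.
  by exists S; split=> //; rewrite -(setD1K cD) Dc0 setU0 sub1set.
have [y y_Dc||Z [sZWDc sDcZ violZ]] := IH (D :\ c) _ _ Dc0.
- by apply: viol; move: y_Dc; rewrite inE => /andP[].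
- by move: leDm; rewrite (cardsD1 c D) cD.
exists (Z :|: S); split.
- by rewrite subUset sSWD (subset_trans sZWDc) // setUS // subsetDl.
- by rewrite -(setD1K cD) subUset sub1set inE cS orbT (subset_trans sDcZ) ?subsetUl.
- apply: supported_setU_violated suppW _ violZ violS.
  apply/subsetP => y; rewrite inE => /andP[yZ yS].
  case/setU1P: (subsetP sScW y yS) => [yc|//]; subst y.
  by move/(subsetP sZWDc): yZ; rewrite !inE eqxx /= orbF.
Qed.

Lemma supported_exchange x W Ws :
  0 <= x -> supported x W -> supported (2 * x) Ws -> (#|W| < #|Ws|)%N ->
  exists2 c, c \notin W & supported x (c |: W).
Proof.
move=> x_ge0 suppW suppWs ltWWs; apply/exists_inP; apply: contraT.
rewrite negb_exists_in => /forall_inP no_ext.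
have viol c : c \in Ws :\: W ->
    exists2 S : {set C}, S \subset c |: W & (N S)%:R < x * #|S|%:R.
  rewrite inE => /andP[cNW _]; have /forall_inPn[S sScW] := no_ext c cNW.
  by rewrite -ltNge; exists S.
have D0 : Ws :\: W != set0.
  by rewrite -card_gt0 cardsD setIC; have := subset_leq_card (subsetIl W Ws); lia.
have [Z [sZWD sDZ violZ]] := violated_cover suppW viol D0.
have leZ : (#|Z| <= (#|Z :&: Ws|).*2)%N.
  apply: card_le_double_setI (ltnW ltWWs) _ sDZ.
  by apply: subset_trans sZWD _; rewrite setUS // subsetDl.
have suppY := forall_inP suppWs _ (subsetIr Z Ws).
have le_NY_NZ : (N (Z :&: Ws))%:R <= (N Z)%:R :> R.
  by rewrite ler_nat napproversS ?subsetIl.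
move: leZ; rewrite -(ler_nat R) -muln2 natrM => /(ler_wpM2l x_ge0).
lra.
Qed.

Lemma completion_card k W Wbar : completion R A k W Wbar -> #|Wbar| = k.
Proof. by elim. Qed.

Lemma completion_supported x k W Wbar :
  completion R A k W Wbar ->
  (forall X : {set C}, (#|X| < k)%N -> supported x X ->
     exists2 c, c \notin X & supported x (c |: X)) ->
  supported x W -> supported x Wbar.
Proof.
elim=> // X c Wbar' ltXk cNX c_max _ IH ext suppX; apply: IH => //.
have [c' c'NX suppc'X] := ext X ltXk suppX.
have U0 d : d |: X != set0 by apply/set0Pn; exists d; apply: setU11.
rewrite -supp_ge_supported // in suppc'X; rewrite -supp_ge_supported //.
exact: le_trans suppc'X (c_max c' c'NX).
Qed.

End Support.

Theorem theorem8 (R : realFieldType) (C : finType) (n : nat)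
    (A : 'I_n -> {set C}) (k : nat) (W Wbar : {set C}) :
  (0 < n)%N -> (1 <= k)%N -> (k <= #|C|)%N ->
  (#|W| <= k)%N ->
  affordable R A k W ->
  completion R A k W Wbar ->
  max_supp R A k / 2 <= supp R A Wbar.
Proof.
move=> n_gt0 k_gt0 _ _ affW complW.
rewrite ler_pdivrMr ?ltr0n //; apply: bigmax_le => [|Ws /eqP cardWs].
  by rewrite mulr_ge0 ?supp_ge0.
have Ws0 : Ws != set0 by rewrite -card_gt0 cardWs.
set x := supp R A Ws / 2.
have x_ge0 : 0 <= x by rewrite divr_ge0 ?supp_ge0.
have suppWs : supported A (2 * x) Ws.
  by rewrite mulrC divfK ?pnatr_eq0 // supported_supp.
have suppW : supported A x W.
  apply: supported_le (affordable_supported n_gt0 k_gt0 affW).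
  have := supp_le_div_card R A Ws0; rewrite cardWs /x; have := supp_ge0 R A Ws; lra.
have ext (X : {set C}) : (#|X| < k)%N -> supported A x X ->
    exists2 c, c \notin X & supported A x (c |: X).
  by move=> ltXk suppX; apply: supported_exchange x_ge0 suppX suppWs _; rewrite cardWs.
suff : x <= supp R A Wbar by rewrite /x ler_pdivrMr ?ltr0n.
rewrite supp_ge_supported ?(completion_supported complW ext) //.
by rewrite -card_gt0 (completion_card complW).
Qed.
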